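(* There exists a constant $C_0$ such that for every $m,\ell\ge1$, every choice of $\sigma_1\ge\sigma_2\ge\dots\ge\sigma_m\ge0$, $\rho_1\ge\rho_2\ge\dots\ge\rho_\ell>0$, $b_1,\dots,b_m>0$, $c_1,\dots,c_\ell>0$, every $1\le k\le\ell$, and both choices of sign, \[ \Bigl|\int_0^{\sqrt{\rho_\ell}}e^{\frac12i\lambda^2}e^{\pm i\sum_{j=1}^mb_j\sqrt{\lambda^2+\sigma_j}}\exp\Bigl(-\sum_{i=1}^\ell c_i\sqrt{\rho_i-\lambda^2}\Bigr)\frac{\lambda}{\sqrt{\rho_k-\lambda^2}}\,d\lambda\Bigr|\le C_0\min\Bigl[(1+\sigma_1+\rho_\ell)^{1/4},\ m^{3/2}c_k^{-1}\max_{j,i}(b_j+c_i)\Bigr]. \] *)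

From Stdlib Require Import Reals.
From Coquelicot Require Import Coquelicot.
Open Scope R_scope.

Fixpoint sum1 (f : nat -> R) (n : nat) : R :=
  match n with
  | O => 0
  | S n' => sum1 f n' + f (S n')
  end.

Fixpoint max1 (f : nat -> R) (n : nat) : R :=
  match n with
  | O => 0
  | 1%nat => f 1%nat
  | S n' => Rmax (max1 f n') (f (S n'))
  end.

(* The integrand
   e^{i lam^2/2} e^{eps i sum_j b_j sqrt(lam^2+sigma_j)}
     * exp(- sum_i c_i sqrt(rho_i - lam^2)) * lam / sqrt(rho_k - lam^2),
   written as amp * (cos phase, sin phase) with the real amplitude amp. *)
Definition integrand (m l k : nat) (eps : R) (sigma rho b c : nat -> R)
  (lam : R) : C :=
  let phase := lam ^ 2 / 2 + eps * sum1 (fun j => b j * sqrt (lam ^ 2 + sigma j)) m in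
  let amp := exp (- sum1 (fun i => c i * sqrt (rho i - lam ^ 2)) l)
             * lam / sqrt (rho k - lam ^ 2) in
  (amp * cos phase, amp * sin phase).

(* Write the integrand as x A(x) e^{i psi(x)}, with the increasing amplitude
   A(x) = e^{-sum_i c_i sqrt(rho_i - x^2)} / sqrt(rho_k - x^2) and the phase
   psi(x) = x^2/2 +- sum_j b_j sqrt(x^2 + sigma_j), and bound the real and imaginary parts
   separately. Since x A(x) <= x / sqrt(rho_l - x^2), the integral over [y, z] is at most
   sqrt(rho_l - y^2): this gives convergence at sqrt(rho_l) and handles [0, 1] as well as the
   end of the interval where rho_l - x^2 is small. On the rest one integrates by parts.
   Against the whole phase, psi'(x) = x h(x) with h = 1 +- sum_j b_j / sqrt(x^2 + sigma_j)
   monotone, a van der Corput argument with the cut-off |h| >= (rho_l + sigma_1)^{-1/2}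
   yields the bound (1 + sigma_1 + rho_l)^{1/4}. Against the chirp x^2/2 alone, the factor
   e^{+- i sum_j b_j sqrt(x^2 + sigma_j)} becomes part of the amplitude, with derivative
   at most sum_j b_j, and int x A <= 1/c_k yields the bound m^{3/2} c_k^{-1} max (b_j + c_i). *)

From Stdlib Require Import Reals Lra Lia Psatz.
From Coquelicot Require Import Coquelicot.
Open Scope R_scope.

(** * Finite sums *)

Lemma sum1_le (f g : nat -> R) n :
  (forall j, (1 <= j <= n)%nat -> f j <= g j) -> sum1 f n <= sum1 g n.
Proof.
  induction n as [|n IH]; intros H; simpl; [lra|].
  assert (sum1 f n <= sum1 g n) by (apply IH; intros; apply H; lia).
  assert (f (S n) <= g (S n)) by (apply H; lia).
  lra.
Qed.

Lemma sum1_nonneg (f : nat -> R) n :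
  (forall j, (1 <= j <= n)%nat -> 0 <= f j) -> 0 <= sum1 f n.
Proof.
  induction n as [|n IH]; intros H; simpl; [lra|].
  assert (0 <= sum1 f n) by (apply IH; intros; apply H; lia).
  assert (0 <= f (S n)) by (apply H; lia).
  lra.
Qed.

Lemma sum1_scal (f : nat -> R) a n : sum1 (fun j => a * f j) n = a * sum1 f n.
Proof. induction n; simpl; [ring | rewrite IHn; ring]. Qed.

Lemma sum1_const (a : R) n : sum1 (fun _ => a) n = INR n * a.
Proof. induction n; cbn [sum1]; [simpl; ring | rewrite IHn, S_INR; ring]. Qed.

Lemma sum1_ge_term (f : nat -> R) n k :
  (forall j, (1 <= j <= n)%nat -> 0 <= f j) -> (1 <= k <= n)%nat -> f k <= sum1 f n.
Proof.
  induction n as [|n IH]; intros H Hk; [lia|]. simpl.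
  destruct (Nat.eq_dec k (S n)) as [->|Hne].
  - assert (0 <= sum1 f n) by (apply sum1_nonneg; intros; apply H; lia). lra.
  - assert (f k <= sum1 f n) by (apply IH; [intros; apply H; lia | lia]).
    assert (0 <= f (S n)) by (apply H; lia). lra.
Qed.

Lemma max1_ge (f : nat -> R) n j : (1 <= j <= n)%nat -> f j <= max1 f n.
Proof.
  induction n as [|[|n] IH]; intros Hj; [lia| |].
  - replace j with 1%nat by lia. simpl. lra.
  - change (max1 f (S (S n))) with (Rmax (max1 f (S n)) (f (S (S n)))).
    destruct (Nat.eq_dec j (S (S n))) as [->|Hne].
    + apply Rmax_r.
    + eapply Rle_trans; [apply IH; lia | apply Rmax_l].
Qed.

Lemma nonincreasing_le (u : nat -> R) n :
  (forall i, (1 <= i < n)%nat -> u (S i) <= u i) ->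
  forall i j, (1 <= i <= j)%nat -> (j <= n)%nat -> u j <= u i.
Proof.
  intros H i j. induction j as [|j IH]; intros Hij Hjn; [lia|].
  destruct (Nat.eq_dec i (S j)) as [->|Hne]; [lra|].
  assert (u j <= u i) by (apply IH; lia).
  assert (u (S j) <= u j) by (apply H; lia).
  lra.
Qed.

Lemma is_derive_sum1 (F : nat -> R -> R) (F' : nat -> R) n x :
  (forall j, (1 <= j <= n)%nat -> is_derive (F j) x (F' j)) ->
  is_derive (fun y => sum1 (fun j => F j y) n) x (sum1 F' n).
Proof.
  induction n as [|n IH]; intros H; simpl.
  - apply (is_derive_const 0).
  - apply (is_derive_plus (fun y => sum1 (fun j => F j y) n) (F (S n))).
    + apply IH; intros; apply H; lia.
    + apply H; lia.
Qed.

Lemma continuous_sum1 (F : nat -> R -> R) n x :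
  (forall j, (1 <= j <= n)%nat -> continuous (F j) x) ->
  continuous (fun y => sum1 (fun j => F j y) n) x.
Proof.
  induction n as [|n IH]; intros H; simpl.
  - apply continuous_const.
  - apply (continuous_plus (fun y => sum1 (fun j => F j y) n) (F (S n))).
    + apply IH; intros; apply H; lia.
    + apply H; lia.
Qed.

(** * Calculus on real intervals *)

(* Coquelicot states these for functions into an abstract normed module, and they do not
   unify with real functions without help. *)
Lemma cont_mult (f g : R -> R) x :
  continuous f x -> continuous g x -> continuous (fun y => f y * g y) x.
Proof. intros; apply (continuous_mult f g); auto. Qed.

Lemma cont_plus (f g : R -> R) x :
  continuous f x -> continuous g x -> continuous (fun y => f y + g y) x.
Proof. intros; apply (continuous_plus f g); auto. Qed.

Lemma cont_minus (f g : R -> R) x :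
  continuous f x -> continuous g x -> continuous (fun y => f y - g y) x.
Proof. intros; apply (continuous_minus f g); auto. Qed.

Lemma cont_inv (f : R -> R) x :
  continuous f x -> f x <> 0 -> continuous (fun y => / f y) x.
Proof. intros; apply (continuous_Rinv_comp f); auto. Qed.

Lemma cont_div (f g : R -> R) x :
  continuous f x -> continuous g x -> g x <> 0 -> continuous (fun y => f y / g y) x.
Proof. intros. apply cont_mult; [|apply cont_inv]; auto. Qed.

Lemma cont_comp (f g : R -> R) x :
  continuous g x -> continuous f (g x) -> continuous (fun y => f (g y)) x.
Proof. intros; apply (continuous_comp g f); auto. Qed.

Lemma cont_abs (f : R -> R) x : continuous f x -> continuous (fun y => Rabs (f y)) x.
Proof. intros; apply (continuous_Rabs_comp f); auto. Qed.

Lemma continuous_of_is_derive (f : R -> R) x l : is_derive f x l -> continuous f x.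
Proof.
  intros H. apply (ex_derive_continuous (K := R_AbsRing) (V := R_NormedModule) f x).
  exists l; exact H.
Qed.

Lemma continuous_of_ex_derive (f : R -> R) x : ex_derive f x -> continuous f x.
Proof. intros [l H]. exact (continuous_of_is_derive f x l H). Qed.

Lemma is_derive_Rmult (f g : R -> R) x df dg :
  is_derive f x df -> is_derive g x dg ->
  is_derive (fun y => f y * g y) x (df * g x + f x * dg).
Proof. intros. apply (is_derive_mult f g); auto. intros; apply Rmult_comm. Qed.

Lemma is_derive_Rcomp (f g : R -> R) x df dg :
  is_derive f (g x) df -> is_derive g x dg -> is_derive (fun y => f (g y)) x (dg * df).
Proof. intros; apply (is_derive_comp f g); auto. Qed.

Lemma RInt_point_R (f : R -> R) a : RInt f a a = 0.
Proof. exact (RInt_point a f). Qed.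

Section ClosedInterval.

Variables p q : R.
Hypothesis Hpq : p <= q.

Lemma nondecreasing_of_is_derive (f df : R -> R) :
  (forall x, p <= x <= q -> is_derive f x (df x)) ->
  (forall x, p <= x <= q -> 0 <= df x) -> f p <= f q.
Proof.
  intros Hd Hpos.
  destruct (MVT_gen f p q df) as [c [Hc E]]; rewrite Rmin_left, Rmax_right in * by lra.
  - intros x Hx. apply Hd; lra.
  - intros x Hx. apply continuity_pt_filterlim, (continuous_of_is_derive _ _ (df x)), Hd; lra.
  - assert (0 <= df c) by (apply Hpos; lra). nra.
Qed.

Lemma RInt_is_derive (f df : R -> R) :
  (forall x, p <= x <= q -> is_derive f x (df x)) ->
  (forall x, p <= x <= q -> continuous df x) -> RInt df p q = f q - f p.
Proof.
  intros Hd Hc. apply is_RInt_unique, (is_RInt_derive f df p q);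
    rewrite Rmin_left, Rmax_right by lra; intros x Hx; [apply Hd | apply Hc]; lra.
Qed.

Lemma ex_RInt_cont (f : R -> R) :
  (forall x, p <= x <= q -> continuous f x) -> ex_RInt f p q.
Proof.
  intros Hc. apply (ex_RInt_continuous (V := R_CompleteNormedModule)).
  rewrite Rmin_left, Rmax_right by lra. exact Hc.
Qed.

Lemma RInt_le_cont (f g : R -> R) :
  (forall x, p <= x <= q -> continuous f x) -> (forall x, p <= x <= q -> continuous g x) ->
  (forall x, p <= x <= q -> f x <= g x) -> RInt f p q <= RInt g p q.
Proof.
  intros. apply RInt_le; auto using ex_RInt_cont. intros; apply H1; lra.
Qed.

Lemma abs_RInt_le_cont (f g : R -> R) :
  (forall x, p <= x <= q -> continuous f x) -> (forall x, p <= x <= q -> continuous g x) ->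
  (forall x, p <= x <= q -> Rabs (f x) <= g x) -> Rabs (RInt f p q) <= RInt g p q.
Proof.
  intros. eapply Rle_trans; [apply abs_RInt_le; auto using ex_RInt_cont|].
  apply RInt_le_cont; auto. intros; apply cont_abs; auto.
Qed.

Lemma RInt_plus_cont (f g : R -> R) :
  (forall x, p <= x <= q -> continuous f x) -> (forall x, p <= x <= q -> continuous g x) ->
  RInt (fun x => f x + g x) p q = RInt f p q + RInt g p q.
Proof. intros. apply (RInt_plus (V := R_CompleteNormedModule) f g); auto using ex_RInt_cont. Qed.

Lemma RInt_scal_cont (f : R -> R) a :
  (forall x, p <= x <= q -> continuous f x) ->
  RInt (fun x => a * f x) p q = a * RInt f p q.
Proof. intros. apply (RInt_scal (V := R_CompleteNormedModule) f); auto using ex_RInt_cont. Qed.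

Lemma RInt_ext_closed (f g : R -> R) :
  (forall x, p <= x <= q -> f x = g x) -> RInt f p q = RInt g p q.
Proof.
  intros H. apply (RInt_ext (V := R_CompleteNormedModule)).
  rewrite Rmin_left, Rmax_right by lra. intros x Hx. apply H; lra.
Qed.

End ClosedInterval.

Lemma RInt_Chasles_cont (f : R -> R) p q r : p <= q -> q <= r ->
  (forall x, p <= x <= r -> continuous f x) -> RInt f p r = RInt f p q + RInt f q r.
Proof.
  intros Hpq Hqr Hc. symmetry.
  apply (RInt_Chasles (V := R_CompleteNormedModule)); apply ex_RInt_cont; auto;
    intros; apply Hc; lra.
Qed.

Lemma nonneg_nondecreasing_between (A A' : R -> R) p q : p <= q ->
  (forall x, p <= x <= q -> is_derive A x (A' x)) ->
  (forall x, p <= x <= q -> 0 <= A' x) -> 0 <= A p ->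
  forall x, p <= x <= q -> 0 <= A x <= A q.
Proof.
  intros Hpq dA pA' pA x Hx.
  assert (mono : forall y z, p <= y -> y <= z -> z <= q -> A y <= A z).
  { intros y z Hy Hyz Hz. apply (nondecreasing_of_is_derive y z Hyz A A');
      intros; [apply dA | apply pA']; lra. }
  split; [apply Rle_trans with (A p); auto|]; apply mono; lra.
Qed.

(** * Oscillatory integrals *)

Lemma is_derive_sin_shift a y : is_derive (fun t => sin (t - a)) y (cos (y - a)).
Proof. auto_derive; [exact I | apply Rmult_1_l]. Qed.

Lemma continuous_cos_shift a y : continuous (fun t => cos (t - a)) y.
Proof. apply continuous_of_ex_derive. auto_derive; auto. Qed.

Lemma continuous_sin_shift a y : continuous (fun t => sin (t - a)) y.
Proof. apply continuous_of_ex_derive. auto_derive; auto. Qed.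

Lemma abs_sin_le_1 y : Rabs (sin y) <= 1.
Proof. apply Rabs_le, SIN_bound. Qed.

Lemma abs_cos_le_1 y : Rabs (cos y) <= 1.
Proof. apply Rabs_le, COS_bound. Qed.

Lemma abs_sin_mult_le y u : Rabs (sin y * u) <= Rabs u.
Proof.
  rewrite Rabs_mult. pose proof (abs_sin_le_1 y). pose proof (Rabs_pos u).
  pose proof (Rabs_pos (sin y)). nra.
Qed.

Lemma cos_add_shift u t a :
  cos (u + t - a) = cos (u - a) * cos (t - 0) + cos (u - (a - PI / 2)) * cos (t - PI / 2).
Proof.
  replace (u + t - a) with ((u - a) + t) by ring.
  replace (u - (a - PI / 2)) with ((u - a) + PI / 2) by ring.
  rewrite Rminus_0_r, (cos_plus (u - a) t), (cos_plus (u - a) (PI / 2)), (cos_minus t (PI / 2)),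
    cos_PI2, sin_PI2.
  ring.
Qed.

Lemma abs_RInt_cos_by_parts (phi phi' G G' : R -> R) p q alpha : p <= q ->
  (forall x, p <= x <= q -> is_derive phi x (phi' x)) ->
  (forall x, p <= x <= q -> continuous phi' x) ->
  (forall x, p <= x <= q -> is_derive G x (G' x)) ->
  (forall x, p <= x <= q -> continuous G' x) ->
  Rabs (RInt (fun x => phi' x * cos (phi x - alpha) * G x) p q)
  <= Rabs (G p) + Rabs (G q) + RInt (fun x => Rabs (G' x)) p q.
Proof.
  intros Hpq dphi cphi' dG cG'.
  assert (cphi : forall x, p <= x <= q -> continuous phi x)
    by (intros; eapply continuous_of_is_derive, dphi; auto).
  assert (cG : forall x, p <= x <= q -> continuous G x)
    by (intros; eapply continuous_of_is_derive, dG; auto).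
  set (g x := phi' x * cos (phi x - alpha) * G x).
  set (k x := sin (phi x - alpha) * G' x).
  assert (cg : forall x, p <= x <= q -> continuous g x).
  { intros x Hx. apply cont_mult; [apply cont_mult|]; auto.
    apply (cont_comp (fun t => cos (t - alpha))); auto using continuous_cos_shift. }
  assert (ck : forall x, p <= x <= q -> continuous k x).
  { intros x Hx. apply cont_mult; auto.
    apply (cont_comp (fun t => sin (t - alpha))); auto using continuous_sin_shift. }
  assert (FTC : RInt g p q + RInt k p q
                = sin (phi q - alpha) * G q - sin (phi p - alpha) * G p).
  { rewrite <- RInt_plus_cont by auto.
    apply (RInt_is_derive p q Hpq (fun x => sin (phi x - alpha) * G x));
      [|intros; apply cont_plus; auto].
    intros x Hx. unfold g, k.
    apply (is_derive_Rmult (fun y => sin (phi y - alpha)) G); auto.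
    apply (is_derive_Rcomp (fun t => sin (t - alpha))); auto using is_derive_sin_shift. }
  assert (Hk : Rabs (RInt k p q) <= RInt (fun x => Rabs (G' x)) p q).
  { apply abs_RInt_le_cont; auto.
    - intros; apply cont_abs; auto.
    - intros; apply abs_sin_mult_le. }
  pose proof (abs_sin_mult_le (phi p - alpha) (G p)).
  pose proof (abs_sin_mult_le (phi q - alpha) (G q)).
  replace (RInt g p q)
    with (sin (phi q - alpha) * G q + - (sin (phi p - alpha) * G p) + - RInt k p q) by lra.
  eapply Rle_trans; [apply Rabs_triang|]. rewrite Rabs_Ropp.
  eapply Rle_trans; [apply Rplus_le_compat_r, Rabs_triang|]. rewrite Rabs_Ropp.
  lra.
Qed.

Section VanDerCorput.

Variables (A A' psi h h' : R -> R) (p q mu alpha : R).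
Hypotheses (Hmu : 0 < mu) (Hpq : p <= q).
Hypothesis psi_deriv : forall x, p <= x <= q -> is_derive psi x (x * h x).
Hypothesis h_deriv : forall x, p <= x <= q -> is_derive h x (h' x).
Hypothesis h'_cont : forall x, p <= x <= q -> continuous h' x.
Hypothesis h'_sign : (forall x, p <= x <= q -> 0 <= h' x) \/ (forall x, p <= x <= q -> h' x <= 0).
Hypothesis h_far :
  (forall x, p <= x <= q -> mu <= h x) \/ (forall x, p <= x <= q -> h x <= - mu).
Hypothesis A_deriv : forall x, p <= x <= q -> is_derive A x (A' x).
Hypothesis A'_cont : forall x, p <= x <= q -> continuous A' x.
Hypothesis A'_nonneg : forall x, p <= x <= q -> 0 <= A' x.
Hypothesis A_nonneg : 0 <= A p.

Let A_between := nonneg_nondecreasing_between A A' p q Hpq A_deriv A'_nonneg A_nonneg.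

Let abs_h_ge x : p <= x <= q -> mu <= Rabs (h x).
Proof.
  intros Hx. destruct h_far as [H|H]; specialize (H x Hx);
    unfold Rabs; destruct Rcase_abs; lra.
Qed.

Let h_neq0 x : p <= x <= q -> h x <> 0.
Proof. intros Hx E. pose proof (abs_h_ge x Hx). rewrite E, Rabs_R0 in *. lra. Qed.

Let h_cont x : p <= x <= q -> continuous h x.
Proof. intros. eapply continuous_of_is_derive, h_deriv; auto. Qed.

Let cont_div_h2 (f : R -> R) x :
  p <= x <= q -> continuous f x -> continuous (fun y => f y / h y ^ 2) x.
Proof.
  intros Hx Hf. apply cont_div; auto.
  - simpl. apply cont_mult; [|apply cont_mult; [|apply continuous_const]]; auto.
  - apply pow_nonzero, h_neq0; auto.
Qed.

Lemma inv_sub_inv_le x y : p <= x <= q -> p <= y <= q -> / h x - / h y <= / mu.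
Proof.
  intros Hx Hy.
  destruct h_far as [H|H]; pose proof (H x Hx); pose proof (H y Hy).
  - assert (/ h x <= / mu) by (apply Rinv_le_contravar; lra).
    assert (0 < / h y) by (apply Rinv_0_lt_compat; lra). lra.
  - assert (/ h x < 0) by (apply Rinv_lt_0_compat; lra).
    assert (/ (- h y) <= / mu) by (apply Rinv_le_contravar; lra).
    rewrite Rinv_opp in *. lra.
Qed.

(* [|h'| / h^2] is the absolute value of the derivative of the monotone function [1 / h]. *)
Lemma RInt_abs_deriv_div_sqr_le : RInt (fun x => Rabs (h' x) / h x ^ 2) p q <= / mu.
Proof.
  destruct h'_sign as [Hs|Hs].
  - rewrite (RInt_ext_closed p q Hpq _ (fun x => h' x / h x ^ 2))
      by (intros x Hx; rewrite Rabs_right by (apply Rle_ge, Hs; auto); reflexivity).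
    rewrite (RInt_is_derive p q Hpq (fun x => - / h x)).
    + pose proof (inv_sub_inv_le p q ltac:(lra) ltac:(lra)). lra.
    + intros x Hx.
      replace (h' x / h x ^ 2) with (- (- h' x / h x ^ 2)) by (field; auto).
      apply (is_derive_opp (fun y => / h y)), is_derive_inv; auto.
    + intros x Hx. apply cont_div_h2; auto.
  - rewrite (RInt_ext_closed p q Hpq _ (fun x => - h' x / h x ^ 2))
      by (intros x Hx; rewrite Rabs_left1 by auto; reflexivity).
    rewrite (RInt_is_derive p q Hpq (fun x => / h x)).
    + pose proof (inv_sub_inv_le q p ltac:(lra) ltac:(lra)). lra.
    + intros x Hx. apply is_derive_inv; auto.
    + intros x Hx. apply cont_div_h2; auto. apply (continuous_opp h'); auto.
Qed.

Lemma abs_deriv_ratio_le x : p <= x <= q ->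
  Rabs ((A' x * h x - A x * h' x) / h x ^ 2) <= / mu * A' x + A q * (Rabs (h' x) / h x ^ 2).
Proof.
  intros Hx. pose proof (abs_h_ge x Hx). pose proof (A_between x Hx). pose proof (A'_nonneg x Hx).
  assert (Hh2 : 0 < h x ^ 2) by (apply pow2_gt_0, h_neq0, Hx).
  replace ((A' x * h x - A x * h' x) / h x ^ 2) with (A' x / h x + - (A x * (h' x / h x ^ 2)))
    by (field; auto).
  eapply Rle_trans; [apply Rabs_triang|]. rewrite Rabs_Ropp.
  apply Rplus_le_compat.
  - unfold Rdiv. rewrite Rabs_mult, Rabs_inv, (Rabs_right (A' x)) by lra.
    rewrite Rmult_comm. apply Rmult_le_compat_r; [lra|]. apply Rinv_le_contravar; lra.
  - rewrite Rabs_mult, (Rabs_right (A x)), Rabs_div, (Rabs_right (h x ^ 2)) by lra.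
    apply Rmult_le_compat_r; [apply Rdiv_le_0_compat; [apply Rabs_pos | lra] | lra].
Qed.

Lemma abs_RInt_cos_phase_le :
  Rabs (RInt (fun x => x * A x * cos (psi x - alpha)) p q) <= 4 * A q / mu.
Proof.
  assert (A_cont : forall x, p <= x <= q -> continuous A x)
    by (intros; eapply continuous_of_is_derive, A_deriv; auto).
  assert (Hmu' : 0 < / mu) by (apply Rinv_0_lt_compat; lra).
  rewrite (RInt_ext_closed p q Hpq _ (fun x => x * h x * cos (psi x - alpha) * (A x / h x)))
    by (intros x Hx; field; auto).
  eapply Rle_trans.
  { apply (abs_RInt_cos_by_parts psi (fun x => x * h x) (fun x => A x / h x)
             (fun x => (A' x * h x - A x * h' x) / h x ^ 2)); auto.
    - intros; apply cont_mult; auto using continuous_id.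
    - intros x Hx. apply is_derive_div; auto.
    - intros x Hx. apply cont_div_h2; auto.
      apply cont_minus; apply cont_mult; auto. }
  assert (ratio_bnd : forall x, p <= x <= q -> Rabs (A x / h x) <= A q / mu).
  { intros x Hx. pose proof (abs_h_ge x Hx). pose proof (A_between x Hx).
    rewrite Rabs_div, Rabs_right by (auto; lra).
    unfold Rdiv. apply Rmult_le_compat; try lra.
    - left; apply Rinv_0_lt_compat; lra.
    - apply Rinv_le_contravar; lra. }
  assert (w_cont : forall x, p <= x <= q -> continuous (fun y => Rabs (h' y) / h y ^ 2) x)
    by (intros; apply cont_div_h2, cont_abs; auto).
  assert (RInt (fun x => Rabs ((A' x * h x - A x * h' x) / h x ^ 2)) p q <= 2 * A q / mu).
  { eapply Rle_trans; [apply (RInt_le_cont p q Hpq _ (fun x => / mu * A' x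
                                   + A q * (Rabs (h' x) / h x ^ 2)))|].
    - intros. apply cont_abs, cont_div_h2; auto. apply cont_minus; apply cont_mult; auto.
    - intros. apply cont_plus; apply cont_mult; auto using continuous_const.
    - exact abs_deriv_ratio_le.
    - rewrite RInt_plus_cont, !RInt_scal_cont, (RInt_is_derive p q Hpq A A'); auto.
      + pose proof RInt_abs_deriv_div_sqr_le. pose proof (A_between p ltac:(lra)).
        pose proof (A_between q ltac:(lra)).
        assert (A q * RInt (fun x => Rabs (h' x) / h x ^ 2) p q <= A q * / mu)
          by (apply Rmult_le_compat_l; lra).
        unfold Rdiv. nra.
      + intros. apply cont_mult; auto using continuous_const.
      + intros. apply cont_mult; auto using continuous_const. }
  pose proof (ratio_bnd p ltac:(lra)). pose proof (ratio_bnd q ltac:(lra)).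
  unfold Rdiv in *. lra.
Qed.

End VanDerCorput.

Section ChirpAmplitude.

Variables (A A' theta theta' : R -> R) (p q B alpha beta : R).
Hypothesis Hpq : p <= q.
Hypothesis theta_deriv : forall x, p <= x <= q -> is_derive theta x (theta' x).
Hypothesis theta'_cont : forall x, p <= x <= q -> continuous theta' x.
Hypothesis theta'_bound : forall x, p <= x <= q -> Rabs (theta' x) <= B.
Hypothesis A_deriv : forall x, p <= x <= q -> is_derive A x (A' x).
Hypothesis A'_cont : forall x, p <= x <= q -> continuous A' x.
Hypothesis A'_nonneg : forall x, p <= x <= q -> 0 <= A' x.
Hypothesis A_nonneg : 0 <= A p.

(* Only the chirp [cos (x^2/2 - alpha)] is integrated; [A x * cos (theta x - beta)] is an
   amplitude of bounded variation. *)
Lemma abs_RInt_chirp_le :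
  Rabs (RInt (fun x => x * cos (x ^ 2 / 2 - alpha) * (A x * cos (theta x - beta))) p q)
  <= 2 * A q + B * RInt A p q.
Proof.
  pose proof (nonneg_nondecreasing_between A A' p q Hpq A_deriv A'_nonneg A_nonneg) as A_bnd.
  assert (A_cont : forall x, p <= x <= q -> continuous A x)
    by (intros; eapply continuous_of_is_derive, A_deriv; auto).
  assert (theta_cont : forall x, p <= x <= q -> continuous theta x)
    by (intros; eapply continuous_of_is_derive, theta_deriv; auto).
  set (G' x := A' x * cos (theta x - beta) + A x * (theta' x * - sin (theta x - beta))).
  assert (G'_cont : forall x, p <= x <= q -> continuous G' x).
  { intros x Hx. apply cont_plus; apply cont_mult; auto.
    - apply (cont_comp (fun t => cos (t - beta))); auto using continuous_cos_shift.
    - apply cont_mult; auto. apply (continuous_opp (fun x => sin (theta x - beta))).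
      apply (cont_comp (fun t => sin (t - beta))); auto using continuous_sin_shift. }
  eapply Rle_trans.
  { apply (abs_RInt_cos_by_parts (fun x => x ^ 2 / 2) (fun x => x) _ G'); auto.
    - intros x Hx. auto_derive; [exact I | field].
    - intros; apply continuous_id.
    - intros x Hx. apply (is_derive_Rmult A (fun y => cos (theta y - beta))); auto.
      apply (is_derive_Rcomp (fun t => cos (t - beta))); auto.
      auto_derive; [exact I | rewrite Rmult_1_l; reflexivity]. }
  assert (G_bnd : forall x, p <= x <= q -> Rabs (A x * cos (theta x - beta)) <= A x).
  { intros x Hx. rewrite Rmult_comm, Rabs_mult, (Rabs_right (A x)) by (apply Rle_ge, A_bnd, Hx).
    pose proof (abs_cos_le_1 (theta x - beta)). pose proof (A_bnd x Hx). nra. }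
  assert (RInt (fun x => Rabs (G' x)) p q <= RInt (fun x => A' x + B * A x) p q).
  { apply RInt_le_cont; auto.
    - intros; apply cont_abs; auto.
    - intros x Hx. apply cont_plus; auto. apply cont_mult; auto using continuous_const.
    - intros x Hx. pose proof (A_bnd x Hx). pose proof (A'_nonneg x Hx).
      pose proof (theta'_bound x Hx). pose proof (Rabs_pos (theta' x)).
      pose proof (abs_sin_le_1 (theta x - beta)). pose proof (abs_cos_le_1 (theta x - beta)).
      unfold G'. eapply Rle_trans; [apply Rabs_triang|].
      rewrite !Rabs_mult, Rabs_Ropp, (Rabs_right (A' x)), (Rabs_right (A x)) by lra.
      apply Rplus_le_compat; [nra|].
      rewrite Rmult_comm. apply Rmult_le_compat_r; [lra|].
      pose proof (Rabs_pos (sin (theta x - beta))). nra. }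
  rewrite RInt_plus_cont, RInt_scal_cont, (RInt_is_derive p q Hpq A A') in H; auto.
  - pose proof (G_bnd p ltac:(lra)). pose proof (G_bnd q ltac:(lra)). lra.
  - intros x Hx. apply cont_mult; auto using continuous_const.
Qed.

End ChirpAmplitude.

Lemma nondecreasing_cut (h : R -> R) a z v : a <= z ->
  (forall x, a <= x <= z -> continuous h x) ->
  (forall x y, a <= x -> x <= y -> y <= z -> h x <= h y) ->
  exists p, a <= p <= z /\
    (p = a \/ forall x, a <= x <= p -> h x <= v) /\
    (p = z \/ forall x, p <= x <= z -> v <= h x).
Proof.
  intros Haz h_cont h_mono.
  destruct (Rle_lt_dec v (h a)) as [Ha|Ha].
  { exists a. split; [lra|]. split; [left; reflexivity|]. right; intros x Hx.
    pose proof (h_mono a x ltac:(lra) ltac:(lra) ltac:(lra)). lra. }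
  destruct (Rle_lt_dec (h z) v) as [Hz|Hz].
  { exists z. split; [lra|]. split; [|left; reflexivity]. right; intros x Hx.
    pose proof (h_mono x z ltac:(lra) ltac:(lra) ltac:(lra)). lra. }
  destruct (Ranalysis5.IVT_interv (fun x => h x - v) a z) as [p [Hp E]].
  - intros x Hx. apply continuity_pt_minus; [|apply continuity_pt_const; intros ? ?; reflexivity].
    apply continuity_pt_filterlim, h_cont; lra.
  - destruct (Req_dec a z) as [->|]; lra.
  - lra.
  - lra.
  - exists p. split; [lra|]. split.
    + right; intros x Hx. pose proof (h_mono x p ltac:(lra) ltac:(lra) ltac:(lra)). lra.
    + right; intros x Hx. pose proof (h_mono p x ltac:(lra) ltac:(lra) ltac:(lra)). lra.
Qed.

Lemma nondecreasing_split3 (h : R -> R) a z mu : a <= z -> 0 < mu ->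
  (forall x, a <= x <= z -> continuous h x) ->
  (forall x y, a <= x -> x <= y -> y <= z -> h x <= h y) ->
  exists p q, a <= p <= q /\ q <= z /\
    (p = a \/ forall x, a <= x <= p -> h x <= - mu) /\
    (p = q \/ forall x, p <= x <= q -> - mu <= h x <= mu) /\
    (q = z \/ forall x, q <= x <= z -> mu <= h x).
Proof.
  intros Haz Hmu h_cont h_mono.
  destruct (nondecreasing_cut h a z (- mu)) as (p & Hp & Hleft & Hmid1); auto.
  destruct (nondecreasing_cut h p z mu) as (q & Hq & Hmid2 & Hright); try lra.
  { intros; apply h_cont; lra. }
  { intros; apply h_mono; lra. }
  exists p, q. repeat split; auto; try lra.
  destruct (Req_dec p q) as [|Hpq]; [left; auto | right].
  destruct Hmid1 as [|Hmid1]; [lra|]. destruct Hmid2 as [|Hmid2]; [lra|].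
  intros x Hx. split; [apply Hmid1 | apply Hmid2]; lra.
Qed.

(** * The integrand *)

Lemma sqrt_neq_0 a : 0 < a -> sqrt a <> 0.
Proof. intros. apply Rgt_not_eq, sqrt_lt_R0; auto. Qed.

Lemma exp_le_1 a : a <= 0 -> exp a <= 1.
Proof.
  intros H. rewrite <- exp_0. destruct (Req_dec a 0) as [->|]; [lra|].
  left; apply exp_increasing; lra.
Qed.

Lemma Rinv_nonneg a : 0 <= a -> 0 <= / a.
Proof.
  intros H. destruct (Req_dec a 0) as [->|]; [rewrite Rinv_0; lra|].
  left; apply Rinv_0_lt_compat; lra.
Qed.

Lemma sqrt_sub_sqrt_pred_le_1 a : 1 <= a -> sqrt a - sqrt (a - 1) <= 1.
Proof.
  intros H. pose proof (sqrt_pos (a - 1)).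
  assert (sqrt a <= sqrt (a - 1) + 1); [|lra].
  rewrite <- (sqrt_pow2 (sqrt (a - 1) + 1)) by lra. apply sqrt_le_1_alt.
  replace ((sqrt (a - 1) + 1) ^ 2) with (sqrt (a - 1) ^ 2 + 2 * sqrt (a - 1) + 1) by ring.
  rewrite pow2_sqrt by lra. lra.
Qed.

Section Integrand.

Variables (m l k : nat) (eps : R) (sigma rho b c : nat -> R).
Hypothesis m_pos : (1 <= m)%nat.
Hypothesis k_range : (1 <= k <= l)%nat.
Hypothesis rho_ge : forall i, (1 <= i <= l)%nat -> rho l <= rho i.
Hypothesis rho_pos : 0 < rho l.
Hypothesis sigma_range : forall j, (1 <= j <= m)%nat -> 0 <= sigma j <= sigma 1%nat.
Hypothesis b_pos : forall j, (1 <= j <= m)%nat -> 0 < b j.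
Hypothesis c_pos : forall i, (1 <= i <= l)%nat -> 0 < c i.
Hypothesis eps_sign : eps = 1 \/ eps = -1.

(* The integrand is [x * amp x * exp (i * phase x)]; its real and imaginary parts are
   [wave 0] and [wave (PI / 2)]. *)
Definition damping x := sum1 (fun i => c i * sqrt (rho i - x ^ 2)) l.
Definition damping_rate x := sum1 (fun i => c i / sqrt (rho i - x ^ 2)) l.
Definition theta x := sum1 (fun j => b j * sqrt (x ^ 2 + sigma j)) m.
Definition theta_rate x := sum1 (fun j => b j / sqrt (x ^ 2 + sigma j)) m.
Definition theta_curv x := sum1 (fun j => b j / sqrt (x ^ 2 + sigma j) ^ 3) m.
Definition amp x := exp (- damping x) / sqrt (rho k - x ^ 2).
Definition amp' x := amp x * x * (damping_rate x + / sqrt (rho k - x ^ 2) ^ 2).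
Definition phase x := x ^ 2 / 2 + eps * theta x.
Definition slope x := 1 + eps * theta_rate x.
Definition wave alpha x := x * amp x * cos (phase x - alpha).

Let rho_k_ge : rho l <= rho k.
Proof. apply rho_ge, k_range. Qed.

Let c_k_pos : 0 < c k.
Proof. apply c_pos, k_range. Qed.

Let sigma_1_nonneg : 0 <= sigma 1%nat.
Proof. apply (sigma_range 1%nat); lia. Qed.

Let sq_lt_rho x i : x ^ 2 < rho l -> (1 <= i <= l)%nat -> 0 < rho i - x ^ 2.
Proof. intros Hx Hi. pose proof (rho_ge i Hi). lra. Qed.

Let sq_add_sigma_pos x j : 0 < x -> (1 <= j <= m)%nat -> 0 < x ^ 2 + sigma j.
Proof. intros Hx Hj. pose proof (sigma_range j Hj). nra. Qed.

Lemma is_derive_damping x : x ^ 2 < rho l -> is_derive damping x (- x * damping_rate x).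
Proof.
  intros Hx. unfold damping_rate. rewrite <- sum1_scal.
  apply (is_derive_sum1 (fun i y => c i * sqrt (rho i - y ^ 2))).
  intros i Hi. pose proof (sq_lt_rho x i Hx Hi).
  auto_derive; [lra|].
  replace (rho i + - (x * (x * 1))) with (rho i - x ^ 2) by ring.
  field. apply sqrt_neq_0; lra.
Qed.

Lemma continuous_damping_rate x : x ^ 2 < rho l -> continuous damping_rate x.
Proof.
  intros Hx. apply (continuous_sum1 (fun i y => c i / sqrt (rho i - y ^ 2))). intros i Hi.
  pose proof (sq_lt_rho x i Hx Hi).
  apply continuous_of_ex_derive. auto_derive. repeat split; try lra. apply sqrt_neq_0; lra.
Qed.

Lemma is_derive_theta x : 0 < x -> is_derive theta x (x * theta_rate x).
Proof.
  intros Hx. unfold theta_rate. rewrite <- sum1_scal.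
  apply (is_derive_sum1 (fun j y => b j * sqrt (y ^ 2 + sigma j))).
  intros j Hj. pose proof (sq_add_sigma_pos x j Hx Hj).
  auto_derive; [lra|].
  replace (x * (x * 1) + sigma j) with (x ^ 2 + sigma j) by ring.
  field. apply sqrt_neq_0; lra.
Qed.

Lemma continuous_theta x : continuous theta x.
Proof.
  apply (continuous_sum1 (fun j y => b j * sqrt (y ^ 2 + sigma j))). intros j Hj.
  apply cont_mult; [apply continuous_const|].
  apply continuous_sqrt_comp, continuous_of_ex_derive. auto_derive; auto.
Qed.

Lemma is_derive_theta_rate x : 0 < x -> is_derive theta_rate x (- x * theta_curv x).
Proof.
  intros Hx. unfold theta_curv. rewrite <- sum1_scal.
  apply (is_derive_sum1 (fun j y => b j / sqrt (y ^ 2 + sigma j))).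
  intros j Hj. pose proof (sq_add_sigma_pos x j Hx Hj). pose proof (sqrt_neq_0 _ H).
  auto_derive; replace (x * (x * 1) + sigma j) with (x ^ 2 + sigma j) by ring;
    [repeat split; auto; lra|].
  field. auto.
Qed.

Lemma continuous_theta_curv x : 0 < x -> continuous theta_curv x.
Proof.
  intros Hx. apply (continuous_sum1 (fun j y => b j / sqrt (y ^ 2 + sigma j) ^ 3)).
  intros j Hj. pose proof (sq_add_sigma_pos x j Hx Hj).
  pose proof (sqrt_neq_0 _ H).
  apply continuous_of_ex_derive. auto_derive.
  replace (x * (x * 1) + sigma j) with (x ^ 2 + sigma j) by ring.
  repeat split; [lra|]. rewrite Rmult_1_r. repeat apply Rmult_integral_contrapositive; auto.
Qed.

Lemma damping_nonneg x : 0 <= damping x.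
Proof.
  apply sum1_nonneg. intros i Hi. apply Rmult_le_pos; [apply Rlt_le, c_pos, Hi | apply sqrt_pos].
Qed.

Lemma damping_rate_nonneg x : 0 <= damping_rate x.
Proof.
  apply sum1_nonneg. intros i Hi.
  apply Rmult_le_pos; [apply Rlt_le, c_pos, Hi | apply Rinv_nonneg, sqrt_pos].
Qed.

Lemma theta_rate_nonneg x : 0 <= theta_rate x.
Proof.
  apply sum1_nonneg. intros j Hj.
  apply Rmult_le_pos; [apply Rlt_le, b_pos, Hj | apply Rinv_nonneg, sqrt_pos].
Qed.

Lemma theta_curv_nonneg x : 0 <= theta_curv x.
Proof.
  apply sum1_nonneg. intros j Hj.
  apply Rmult_le_pos; [apply Rlt_le, b_pos, Hj | apply Rinv_nonneg, pow_le, sqrt_pos].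
Qed.

Lemma is_derive_amp x : x ^ 2 < rho l -> is_derive amp x (amp' x).
Proof.
  intros Hx. assert (Hk : 0 < rho k - x ^ 2) by lra.
  pose proof (sqrt_neq_0 _ Hk).
  unfold amp', amp, Rdiv.
  replace (exp (- damping x) * / sqrt (rho k - x ^ 2) * x *
             (damping_rate x + / sqrt (rho k - x ^ 2) ^ 2))
    with ((- (- x * damping_rate x)) * exp (- damping x) * / sqrt (rho k - x ^ 2)
          + exp (- damping x) * (- (- (2 * x) / (2 * sqrt (rho k - x ^ 2)))
                                  / sqrt (rho k - x ^ 2) ^ 2))
    by (field; auto).
  apply (is_derive_Rmult (fun y => exp (- damping y)) (fun y => / sqrt (rho k - y ^ 2))).
  - apply (is_derive_Rcomp exp (fun y => - damping y)); [apply is_derive_exp|].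
    apply (is_derive_opp damping), is_derive_damping, Hx.
  - apply (is_derive_inv (fun y => sqrt (rho k - y ^ 2))); auto.
    auto_derive; [lra|].
    replace (rho k + - (x * (x * 1))) with (rho k - x ^ 2) by ring. field; auto.
Qed.

Lemma continuous_amp x : x ^ 2 < rho l -> continuous amp x.
Proof. intros. eapply continuous_of_is_derive, is_derive_amp; auto. Qed.

Lemma continuous_amp' x : x ^ 2 < rho l -> continuous amp' x.
Proof.
  intros Hx. assert (0 < rho k - x ^ 2) by lra.
  apply cont_mult; [apply cont_mult|]; auto using continuous_amp, continuous_id.
  apply cont_plus; [apply continuous_damping_rate; auto|].
  pose proof (sqrt_neq_0 _ H).
  apply continuous_of_ex_derive. auto_derive.
  replace (rho k + - (x * (x * 1))) with (rho k - x ^ 2) by ring.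
  repeat split; [lra|]. rewrite Rmult_1_r. apply Rmult_integral_contrapositive; auto.
Qed.

Lemma amp_pos x : x ^ 2 < rho l -> 0 < amp x.
Proof.
  intros Hx. apply Rdiv_lt_0_compat; [apply exp_pos | apply sqrt_lt_R0; lra].
Qed.

Lemma amp'_nonneg x : 0 <= x -> x ^ 2 < rho l -> 0 <= amp' x.
Proof.
  intros Hx0 Hx. pose proof (amp_pos x Hx). pose proof (damping_rate_nonneg x).
  assert (0 <= / sqrt (rho k - x ^ 2) ^ 2) by apply Rinv_nonneg, pow2_ge_0.
  unfold amp'. apply Rmult_le_pos; [apply Rmult_le_pos|]; lra.
Qed.

Lemma amp_le_inv_sqrt x : x ^ 2 < rho l -> amp x <= / sqrt (rho l - x ^ 2).
Proof.
  intros Hx. unfold amp, Rdiv.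
  pose proof (exp_le_1 (- damping x) ltac:(pose proof (damping_nonneg x); lra)).
  pose proof (exp_pos (- damping x)).
  assert (0 < sqrt (rho l - x ^ 2)) by (apply sqrt_lt_R0; lra).
  assert (sqrt (rho l - x ^ 2) <= sqrt (rho k - x ^ 2)) by (apply sqrt_le_1_alt; lra).
  assert (/ sqrt (rho k - x ^ 2) <= / sqrt (rho l - x ^ 2)) by (apply Rinv_le_contravar; lra).
  assert (0 < / sqrt (rho k - x ^ 2)) by (apply Rinv_0_lt_compat; lra).
  nra.
Qed.

Lemma amp_le_inv x r : x ^ 2 < rho l -> 0 < r -> r ^ 2 <= rho l - x ^ 2 -> amp x <= / r.
Proof.
  intros Hx Hr Hgap. eapply Rle_trans; [apply amp_le_inv_sqrt; auto|].
  apply Rinv_le_contravar; [lra|].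
  rewrite <- (sqrt_pow2 r) by lra. apply sqrt_le_1_alt; lra.
Qed.

Lemma amp_le_exp x : x ^ 2 < rho l ->
  amp x <= exp (- (c k * sqrt (rho k - x ^ 2))) / sqrt (rho k - x ^ 2).
Proof.
  intros Hx. unfold amp, Rdiv.
  apply Rmult_le_compat_r; [left; apply Rinv_0_lt_compat, sqrt_lt_R0; lra|].
  destruct (Req_dec (c k * sqrt (rho k - x ^ 2)) (damping x)) as [->|]; [lra|].
  left; apply exp_increasing, Ropp_lt_contravar.
  assert (c k * sqrt (rho k - x ^ 2) <= damping x); [|lra].
  apply (sum1_ge_term (fun i => c i * sqrt (rho i - x ^ 2))); auto.
  intros i Hi. apply Rmult_le_pos; [apply Rlt_le, c_pos, Hi | apply sqrt_pos].
Qed.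

Let sq_lt_of_le x z : 0 <= x <= z -> z ^ 2 < rho l -> x ^ 2 < rho l.
Proof. intros Hx Hz. assert (x ^ 2 <= z ^ 2) by (apply pow_incr; lra). lra. Qed.

Lemma continuous_x_amp x : x ^ 2 < rho l -> continuous (fun y => y * amp y) x.
Proof. intros. apply cont_mult; auto using continuous_id, continuous_amp. Qed.

Lemma RInt_x_amp_le_sqrt y z : 0 <= y <= z -> z ^ 2 < rho l ->
  RInt (fun x => x * amp x) y z <= sqrt (rho l - y ^ 2) - sqrt (rho l - z ^ 2).
Proof.
  intros Hyz Hz.
  assert (Hx : forall x, y <= x <= z -> 0 < rho l - x ^ 2)
    by (intros x Hx; pose proof (sq_lt_of_le x z ltac:(lra) Hz); lra).
  assert (cont : forall x, y <= x <= z -> continuous (fun x => x / sqrt (rho l - x ^ 2)) x).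
  { intros x Hx'. pose proof (Hx x Hx'). apply continuous_of_ex_derive.
    auto_derive. replace (rho l + - (x * (x * 1))) with (rho l - x ^ 2) by ring.
    repeat split; [lra | apply sqrt_neq_0; lra]. }
  apply Rle_trans with (RInt (fun x => x / sqrt (rho l - x ^ 2)) y z).
  - apply RInt_le_cont; [lra | | auto |].
    + intros x Hx'. apply continuous_x_amp. pose proof (Hx x Hx'). lra.
    + intros x Hx'. unfold Rdiv. apply Rmult_le_compat_l; [lra|].
      apply amp_le_inv_sqrt. pose proof (Hx x Hx'). lra.
  - rewrite (RInt_is_derive y z ltac:(lra) (fun x => - sqrt (rho l - x ^ 2))); [lra| |auto].
    intros x Hx'. pose proof (Hx x Hx'). auto_derive; [lra|].
    replace (rho l + - (x * (x * 1))) with (rho l - x ^ 2) by ring.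
    field. apply sqrt_neq_0; lra.
Qed.

(* [x * amp x] is at most the derivative of [exp (- c_k sqrt (rho_k - x^2)) / c_k], whose
   values lie in [(0, 1 / c_k]]. *)
Lemma RInt_x_amp_le_inv_c y z : 0 <= y <= z -> z ^ 2 < rho l ->
  RInt (fun x => x * amp x) y z <= / c k.
Proof.
  intros Hyz Hz.
  assert (Hx : forall x, y <= x <= z -> 0 < rho k - x ^ 2)
    by (intros x Hx; pose proof (sq_lt_of_le x z ltac:(lra) Hz); lra).
  set (df := fun x => x * (exp (- (c k * sqrt (rho k - x ^ 2))) / sqrt (rho k - x ^ 2))).
  assert (df_cont : forall x, y <= x <= z -> continuous df x).
  { intros x Hx'. pose proof (Hx x Hx'). apply continuous_of_ex_derive. unfold df.
    auto_derive. replace (rho k + - (x * (x * 1))) with (rho k - x ^ 2) by ring.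
    repeat split; [lra | lra | apply sqrt_neq_0; lra]. }
  apply Rle_trans with (RInt df y z).
  - apply RInt_le_cont; [lra | | auto |].
    + intros x Hx'. apply continuous_x_amp, (sq_lt_of_le x z); auto; lra.
    + intros x Hx'. unfold df. apply Rmult_le_compat_l; [lra|].
      apply amp_le_exp, (sq_lt_of_le x z); auto; lra.
  - rewrite (RInt_is_derive y z ltac:(lra) (fun x => / c k * exp (- (c k * sqrt (rho k - x ^ 2)))) df);
      auto.
    + pose proof (exp_pos (- (c k * sqrt (rho k - y ^ 2)))).
      pose proof (exp_le_1 (- (c k * sqrt (rho k - z ^ 2)))
                    ltac:(pose proof (sqrt_pos (rho k - z ^ 2)); nra)).
      assert (0 < / c k) by (apply Rinv_0_lt_compat; lra). nra.
    + intros x Hx'. pose proof (Hx x Hx'). unfold df. auto_derive; [lra|].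
      replace (rho k + - (x * (x * 1))) with (rho k - x ^ 2) by ring.
      field. split; [apply sqrt_neq_0|]; lra.
Qed.

Lemma continuous_wave alpha x : x ^ 2 < rho l -> continuous (wave alpha) x.
Proof.
  intros Hx. apply cont_mult; [apply continuous_x_amp; auto|].
  apply (cont_comp (fun t => cos (t - alpha))); [|apply continuous_cos_shift].
  apply cont_plus; [|apply cont_mult; auto using continuous_const, continuous_theta].
  apply continuous_of_ex_derive. auto_derive. auto.
Qed.

Lemma RInt_wave_Chasles alpha p q r : 0 <= p <= q -> q <= r -> r ^ 2 < rho l ->
  RInt (wave alpha) p r = RInt (wave alpha) p q + RInt (wave alpha) q r.
Proof.
  intros. apply RInt_Chasles_cont; try lra.
  intros x Hx. apply continuous_wave, (sq_lt_of_le x r); auto; lra.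
Qed.

Lemma abs_RInt_wave_le_RInt alpha y z : 0 <= y <= z -> z ^ 2 < rho l ->
  Rabs (RInt (wave alpha) y z) <= RInt (fun x => x * amp x) y z.
Proof.
  intros Hyz Hz.
  assert (Hx : forall x, y <= x <= z -> x ^ 2 < rho l)
    by (intros x Hx; apply (sq_lt_of_le x z); auto; lra).
  apply abs_RInt_le_cont; [lra | intros; apply continuous_wave; auto
                        | intros; apply continuous_x_amp; auto |].
  intros x Hx'. unfold wave. rewrite Rabs_mult.
  pose proof (amp_pos x (Hx x Hx')). pose proof (abs_cos_le_1 (phase x - alpha)).
  rewrite Rabs_right by (apply Rle_ge, Rmult_le_pos; lra).
  assert (0 <= x * amp x) by (apply Rmult_le_pos; lra).
  pose proof (Rabs_pos (cos (phase x - alpha))). nra.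
Qed.

Lemma abs_RInt_wave_le_sqrt alpha y z : 0 <= y <= z -> z ^ 2 < rho l ->
  Rabs (RInt (wave alpha) y z) <= sqrt (rho l - y ^ 2) - sqrt (rho l - z ^ 2).
Proof.
  intros. eapply Rle_trans; [apply abs_RInt_wave_le_RInt | apply RInt_x_amp_le_sqrt]; auto.
Qed.

Lemma is_derive_phase x : 0 < x -> is_derive phase x (x * slope x).
Proof.
  intros Hx. unfold phase, slope.
  replace (x * (1 + eps * theta_rate x)) with (x + eps * (x * theta_rate x)) by ring.
  apply (is_derive_plus (fun y => y ^ 2 / 2) (fun y => eps * theta y)).
  - auto_derive; [exact I | field].
  - apply (is_derive_scal theta), is_derive_theta, Hx.
Qed.

Lemma is_derive_slope x : 0 < x -> is_derive slope x (eps * (- x * theta_curv x)).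
Proof.
  intros Hx. unfold slope. rewrite <- (Rplus_0_l (eps * _)).
  apply (is_derive_plus (fun _ => 1) (fun y => eps * theta_rate y)).
  - apply (is_derive_const 1).
  - apply (is_derive_scal theta_rate), is_derive_theta_rate, Hx.
Qed.

Lemma theta_curv_ge x : 0 < x -> theta_rate x / (x ^ 2 + sigma 1%nat) <= theta_curv x.
Proof.
  intros Hx. unfold Rdiv. rewrite Rmult_comm. unfold theta_rate, theta_curv.
  rewrite <- sum1_scal. apply sum1_le. intros j Hj.
  pose proof (b_pos j Hj). pose proof (sigma_range j Hj).
  pose proof (sq_add_sigma_pos x j Hx Hj) as Hu.
  assert (0 < sqrt (x ^ 2 + sigma j)) by (apply sqrt_lt_R0; lra).
  replace (b j / sqrt (x ^ 2 + sigma j) ^ 3)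
    with (b j / sqrt (x ^ 2 + sigma j) * / (x ^ 2 + sigma j)).
  2: { rewrite <- (sqrt_sqrt (x ^ 2 + sigma j)) at 2 by lra. field. lra. }
  rewrite Rmult_comm. apply Rmult_le_compat_l.
  - apply Rdiv_le_0_compat; lra.
  - apply Rinv_le_contravar; lra.
Qed.

Lemma x_theta_rate_le x : 0 < x -> x * theta_rate x <= sum1 b m.
Proof.
  intros Hx. unfold theta_rate. rewrite <- sum1_scal. apply sum1_le. intros j Hj.
  pose proof (b_pos j Hj). pose proof (sigma_range j Hj).
  assert (x <= sqrt (x ^ 2 + sigma j))
    by (rewrite <- (sqrt_pow2 x) at 1 by lra; apply sqrt_le_1_alt; lra).
  replace (x * (b j / sqrt (x ^ 2 + sigma j))) with (b j * (x / sqrt (x ^ 2 + sigma j)))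
    by (field; lra).
  rewrite <- (Rmult_1_r (b j)) at 2. apply Rmult_le_compat_l; [lra|].
  apply Rmult_le_reg_r with (sqrt (x ^ 2 + sigma j)); [lra|].
  unfold Rdiv. rewrite Rmult_assoc, Rinv_l; lra.
Qed.

Lemma abs_RInt_wave_nonstationary alpha p q mu :
  0 < p <= q -> q ^ 2 < rho l -> 0 < mu ->
  (forall x, p <= x <= q -> mu <= slope x) \/ (forall x, p <= x <= q -> slope x <= - mu) ->
  Rabs (RInt (wave alpha) p q) <= 4 * amp q / mu.
Proof.
  intros Hpq Hq Hmu Hfar.
  assert (Hx : forall x, p <= x <= q -> 0 < x /\ x ^ 2 < rho l)
    by (intros x Hx; split; [lra | apply (sq_lt_of_le x q); auto; lra]).
  apply (abs_RInt_cos_phase_le amp amp' phase slope (fun x => eps * (- x * theta_curv x)));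
    auto; try lra.
  - intros x Hx'. apply is_derive_phase, Hx, Hx'.
  - intros x Hx'. apply is_derive_slope, Hx, Hx'.
  - intros x Hx'. apply cont_mult; [apply continuous_const|].
    apply cont_mult; [apply continuous_of_ex_derive; auto_derive; auto|].
    apply continuous_theta_curv, Hx, Hx'.
  - destruct eps_sign as [->| ->]; [right | left]; intros x Hx';
      pose proof (theta_curv_nonneg x); destruct (Hx x Hx'); nra.
  - intros x Hx'. apply is_derive_amp, Hx, Hx'.
  - intros x Hx'. apply continuous_amp', Hx, Hx'.
  - intros x Hx'. destruct (Hx x Hx'). apply amp'_nonneg; lra.
  - destruct (Hx p ltac:(lra)). left; apply amp_pos; lra.
Qed.

(* For [eps = -1] the slope grows at rate at least [x / (2 (q^2 + sigma_1))] where it is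
   small, so it can stay in [[-mu, mu]] only on a short interval. *)
Lemma stationary_interval_short p q mu : eps = -1 ->
  0 < p <= q -> mu <= 1 / 2 ->
  (forall x, p <= x <= q -> - mu <= slope x <= mu) ->
  q ^ 2 - p ^ 2 <= 8 * (q ^ 2 + sigma 1%nat) * mu.
Proof.
  intros Heps Hpq Hmu Hsmall.
  set (S := q ^ 2 + sigma 1%nat).
  assert (HS : 0 < S) by (unfold S; nra).
  assert (Hmono : slope p - p ^ 2 / (4 * S) <= slope q - q ^ 2 / (4 * S)).
  { apply (nondecreasing_of_is_derive p q ltac:(lra) (fun x => slope x - x ^ 2 / (4 * S))
             (fun x => eps * (- x * theta_curv x) - x / (2 * S))).
    - intros x Hx. apply (is_derive_minus slope (fun y => y ^ 2 / (4 * S))).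
      + apply is_derive_slope; lra.
      + auto_derive; [exact I | field; lra].
    - intros x Hx.
      assert (Hrate : theta_rate x = 1 - slope x) by (unfold slope; rewrite Heps; ring).
      assert (x ^ 2 + sigma 1%nat <= S) by (unfold S; assert (x ^ 2 <= q ^ 2) by (apply pow_incr; lra); lra).
      assert (0 < x ^ 2 + sigma 1%nat) by nra.
      assert (/ (2 * S) <= theta_curv x).
      { eapply Rle_trans; [|apply theta_curv_ge; lra].
        destruct (Hsmall x Hx). unfold Rdiv. rewrite Hrate.
        assert (/ S <= / (x ^ 2 + sigma 1%nat)) by (apply Rinv_le_contravar; lra).
        assert (0 < / S) by (apply Rinv_0_lt_compat; lra).
        replace (/ (2 * S)) with (/ 2 * / S) by (field; lra). nra. }
      rewrite Heps. unfold Rdiv. nra. }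
  destruct (Hsmall p ltac:(lra)), (Hsmall q ltac:(lra)).
  assert (q ^ 2 / (4 * S) - p ^ 2 / (4 * S) <= 2 * mu) by lra.
  replace (q ^ 2 - p ^ 2) with (4 * S * (q ^ 2 / (4 * S) - p ^ 2 / (4 * S))) by (field; lra).
  nra.
Qed.

Lemma RInt_x_amp_le_linear p q r : 0 <= p <= q -> q ^ 2 < rho l -> 0 < r ->
  (forall x, p <= x <= q -> amp x <= / r) ->
  RInt (fun x => x * amp x) p q <= (q ^ 2 - p ^ 2) / (2 * r).
Proof.
  intros Hpq Hq Hr Hamp.
  apply Rle_trans with (RInt (fun x => x * / r) p q).
  - apply RInt_le_cont; [lra | | |].
    + intros x Hx. apply continuous_x_amp, (sq_lt_of_le x q); auto; lra.
    + intros x Hx. apply cont_mult; auto using continuous_id, continuous_const.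
    + intros x Hx. apply Rmult_le_compat_l; [lra | auto].
  - rewrite (RInt_is_derive p q ltac:(lra) (fun x => x ^ 2 / (2 * r))).
    + right; field; lra.
    + intros x Hx. auto_derive; [exact I | field; lra].
    + intros x Hx. apply cont_mult; auto using continuous_id, continuous_const.
Qed.

Lemma slope_nondecreasing x y : eps = -1 -> 0 < x -> x <= y -> slope x <= slope y.
Proof.
  intros Heps Hx Hxy.
  apply (nondecreasing_of_is_derive x y Hxy slope (fun t => eps * (- t * theta_curv t))).
  - intros t Ht. apply is_derive_slope; lra.
  - intros t Ht. rewrite Heps. pose proof (theta_curv_nonneg t). nra.
Qed.

Lemma abs_RInt_wave_far_le alpha p q r : 0 < p <= q -> q ^ 2 < rho l -> 0 < r ->
  amp q <= / r ->
  p = q \/ (forall x, p <= x <= q -> / r ^ 2 <= slope x) \/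
           (forall x, p <= x <= q -> slope x <= - / r ^ 2) ->
  Rabs (RInt (wave alpha) p q) <= 4 * r.
Proof.
  intros Hpq Hq Hr Hamp [<-|Hfar]; [rewrite RInt_point_R, Rabs_R0; lra|].
  eapply Rle_trans;
    [apply (abs_RInt_wave_nonstationary alpha p q (/ r ^ 2)); auto; apply Rinv_0_lt_compat; nra|].
  assert (amp q * r <= 1).
  { apply Rle_trans with (/ r * r); [apply Rmult_le_compat_r; lra|]. rewrite Rinv_l; lra. }
  unfold Rdiv. rewrite Rinv_inv. nra.
Qed.

Lemma abs_RInt_wave_stationary_le alpha p q r : eps = -1 ->
  0 < p <= q -> q ^ 2 < rho l -> 2 <= r -> q ^ 2 + sigma 1%nat <= r ^ 4 ->
  (forall x, p <= x <= q -> amp x <= / r) ->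
  p = q \/ (forall x, p <= x <= q -> - / r ^ 2 <= slope x <= / r ^ 2) ->
  Rabs (RInt (wave alpha) p q) <= 4 * r.
Proof.
  intros Heps Hpq Hq Hr Hqr Hamp [<-|Hsmall]; [rewrite RInt_point_R, Rabs_R0; lra|].
  eapply Rle_trans; [apply abs_RInt_wave_le_RInt; auto; lra|].
  eapply Rle_trans; [apply (RInt_x_amp_le_linear p q r); auto; lra|].
  assert (Hshort : q ^ 2 - p ^ 2 <= 8 * r ^ 2).
  { eapply Rle_trans; [apply (stationary_interval_short p q (/ r ^ 2)); auto; try lra|].
    - apply Rle_trans with (/ 4); [apply Rinv_le_contravar; nra | lra].
    - apply Rle_trans with (8 * r ^ 4 * / r ^ 2).
      + apply Rmult_le_compat_r; [left; apply Rinv_0_lt_compat; nra | lra].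
      + right. field. nra. }
  apply Rmult_le_reg_r with (2 * r); [lra|].
  unfold Rdiv. rewrite Rmult_assoc, Rinv_l by lra. nra.
Qed.

Lemma abs_RInt_wave_le_root4 alpha z :
  16 <= rho l + sigma 1%nat -> 1 <= z -> z ^ 2 <= rho l - sqrt (rho l + sigma 1%nat) ->
  Rabs (RInt (wave alpha) 1 z) <= 12 * sqrt (sqrt (rho l + sigma 1%nat)).
Proof.
  intros HS Hz1 Hz2.
  set (S := rho l + sigma 1%nat) in *. set (r := sqrt (sqrt S)).
  assert (Hr2 : r ^ 2 = sqrt S) by apply pow2_sqrt, sqrt_pos.
  assert (Hr4 : r ^ 4 = S)
    by (replace (r ^ 4) with ((r ^ 2) ^ 2) by ring; rewrite Hr2; apply pow2_sqrt; lra).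
  assert (Hr : 2 <= r).
  { assert (4 <= sqrt S) by (rewrite <- (sqrt_pow2 4) by lra; apply sqrt_le_1_alt; lra).
    unfold r. rewrite <- (sqrt_pow2 2) by lra. apply sqrt_le_1_alt. lra. }
  assert (Hx : forall x, 1 <= x <= z -> 0 < x /\ x ^ 2 < rho l /\ r ^ 2 <= rho l - x ^ 2)
    by (intros x Hx; assert (x ^ 2 <= z ^ 2) by (apply pow_incr; lra); nra).
  assert (amp_le : forall x, 1 <= x <= z -> amp x <= / r)
    by (intros x Hx'; destruct (Hx x Hx') as (? & ? & ?); apply amp_le_inv; lra).
  assert (Hz : z ^ 2 < rho l) by (apply Hx; lra).
  destruct eps_sign as [Heps|Heps].
  { eapply Rle_trans; [apply (abs_RInt_wave_nonstationary alpha 1 z 1); try lra|].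
    - left. intros x Hx'. unfold slope. rewrite Heps. pose proof (theta_rate_nonneg x). lra.
    - pose proof (amp_le z ltac:(lra)). assert (/ r <= / 2) by (apply Rinv_le_contravar; lra).
      lra. }
  assert (slope_cont : forall x, 1 <= x <= z -> continuous slope x)
    by (intros x Hx'; eapply continuous_of_is_derive, is_derive_slope; lra).
  destruct (nondecreasing_split3 slope 1 z (/ r ^ 2) Hz1 ltac:(apply Rinv_0_lt_compat; nra)
              slope_cont) as (p & q & Hpq & Hqz & Hleft & Hmid & Hright).
  { intros x y Hx' Hxy Hy. apply slope_nondecreasing; lra. }
  rewrite (RInt_wave_Chasles alpha 1 p z), (RInt_wave_Chasles alpha p q z); try lra.
  pose proof (abs_RInt_wave_far_le alpha 1 p r ltac:(lra) ltac:(apply Hx; lra) ltac:(lra)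
    ltac:(apply amp_le; lra) ltac:(destruct Hleft; [left | right; right]; auto)).
  pose proof (abs_RInt_wave_stationary_le alpha p q r Heps ltac:(lra) ltac:(apply Hx; lra) Hr
    ltac:(assert (q ^ 2 <= z ^ 2) by (apply pow_incr; lra); unfold S in *; lra)
    ltac:(intros; apply amp_le; lra) Hmid).
  pose proof (abs_RInt_wave_far_le alpha q z r ltac:(lra) Hz ltac:(lra)
    ltac:(apply amp_le; lra) ltac:(destruct Hright; [left | right; left]; auto)).
  pose proof (Rabs_triang (RInt (wave alpha) 1 p) (RInt (wave alpha) p q + RInt (wave alpha) q z)).
  pose proof (Rabs_triang (RInt (wave alpha) p q) (RInt (wave alpha) q z)).
  lra.
Qed.

Lemma abs_RInt_chirp_amp_le alpha beta z : 1 <= z -> z ^ 2 <= rho l - 1 ->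
  Rabs (RInt (fun x => x * cos (x ^ 2 / 2 - alpha) * (amp x * cos (eps * theta x - beta))) 1 z)
  <= 2 + sum1 b m / c k.
Proof.
  intros Hz1 Hz2.
  assert (Hx : forall x, 1 <= x <= z -> 0 < x /\ x ^ 2 < rho l)
    by (intros x Hx; assert (x ^ 2 <= z ^ 2) by (apply pow_incr; lra); nra).
  assert (Hb : 0 <= sum1 b m) by (apply sum1_nonneg; intros j Hj; apply Rlt_le, b_pos, Hj).
  eapply Rle_trans.
  { apply (abs_RInt_chirp_le amp amp' (fun x => eps * theta x)
             (fun x => eps * (x * theta_rate x)) 1 z (sum1 b m)); auto; try lra.
    - intros x Hx'. apply (is_derive_scal theta), is_derive_theta, Hx, Hx'.
    - intros x Hx'. destruct (Hx x Hx').
      apply cont_mult; [apply continuous_const|].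
      eapply cont_mult; [apply continuous_id|].
      eapply continuous_of_is_derive, is_derive_theta_rate; auto.
    - intros x Hx'. destruct (Hx x Hx'). pose proof (x_theta_rate_le x ltac:(lra)).
      assert (0 <= x * theta_rate x) by (pose proof (theta_rate_nonneg x); nra).
      rewrite Rabs_mult, (Rabs_right (x * theta_rate x)) by lra.
      destruct eps_sign as [-> | ->]; rewrite ?Rabs_R1, ?Rabs_m1; lra.
    - intros x Hx'. apply is_derive_amp, Hx, Hx'.
    - intros x Hx'. apply continuous_amp', Hx, Hx'.
    - intros x Hx'. destruct (Hx x Hx'). apply amp'_nonneg; lra.
    - left; apply amp_pos, Hx; lra. }
  destruct (Hx z ltac:(lra)).
  assert (amp z <= 1) by (rewrite <- Rinv_1; apply amp_le_inv; lra).
  assert (RInt amp 1 z <= / c k).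
  { eapply Rle_trans; [|apply (RInt_x_amp_le_inv_c 1 z); auto; lra].
    apply RInt_le_cont; [lra | | |].
    - intros x Hx'. apply continuous_amp, Hx, Hx'.
    - intros x Hx'. apply continuous_x_amp, Hx, Hx'.
    - intros x Hx'. destruct (Hx x Hx'). pose proof (amp_pos x ltac:(lra)). nra. }
  assert (sum1 b m * RInt amp 1 z <= sum1 b m * / c k) by (apply Rmult_le_compat_l; lra).
  unfold Rdiv. lra.
Qed.

Lemma abs_RInt_wave_le_decay alpha z : 1 <= z -> z ^ 2 <= rho l - 1 ->
  Rabs (RInt (wave alpha) 1 z) <= 4 + 2 * (sum1 b m / c k).
Proof.
  intros Hz1 Hz2.
  set (part a t x := x * cos (x ^ 2 / 2 - a) * (amp x * cos (eps * theta x - t))).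
  assert (part_cont : forall a t x, 1 <= x <= z -> continuous (part a t) x).
  { intros a t x Hx. assert (x ^ 2 <= z ^ 2) by (apply pow_incr; lra).
    apply cont_mult; [apply cont_mult|apply cont_mult]; auto using continuous_id.
    - apply (cont_comp (fun u => cos (u - a))); auto using continuous_cos_shift.
      apply continuous_of_ex_derive. auto_derive. exact I.
    - apply continuous_amp. lra.
    - apply (cont_comp (fun u => cos (u - t))); auto using continuous_cos_shift.
      apply cont_mult; auto using continuous_const, continuous_theta. }
  rewrite (RInt_ext_closed 1 z Hz1 _ (fun x => part alpha 0 x + part (alpha - PI / 2) (PI / 2) x))
    by (intros x Hx; unfold wave, phase, part; rewrite cos_add_shift; ring).
  rewrite RInt_plus_cont by auto.
  pose proof (abs_RInt_chirp_amp_le alpha 0 z Hz1 Hz2).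
  pose proof (abs_RInt_chirp_amp_le (alpha - PI / 2) (PI / 2) z Hz1 Hz2).
  pose proof (Rabs_triang (RInt (part alpha 0) 1 z) (RInt (part (alpha - PI / 2) (PI / 2)) 1 z)).
  unfold part in *. lra.
Qed.

Lemma abs_RInt_wave_le_sqrt_rho alpha z : 0 <= z -> z ^ 2 < rho l ->
  Rabs (RInt (wave alpha) 0 z) <= sqrt (rho l).
Proof.
  intros Hz0 Hz. eapply Rle_trans; [apply abs_RInt_wave_le_sqrt; auto; lra|].
  pose proof (sqrt_pos (rho l - z ^ 2)). rewrite pow_i, Rminus_0_r by lia. lra.
Qed.

Lemma abs_RInt_wave_glue alpha y K z : 1 < rho l -> 1 <= y -> y ^ 2 < rho l ->
  (forall t, 1 <= t <= y -> Rabs (RInt (wave alpha) 1 t) <= K) ->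
  0 <= z -> z ^ 2 < rho l ->
  Rabs (RInt (wave alpha) 0 z) <= 1 + K + sqrt (rho l - y ^ 2).
Proof.
  intros Hrho Hy1 Hy HK Hz0 Hz.
  pose proof (sqrt_pos (rho l - y ^ 2)).
  assert (K_nonneg : 0 <= K).
  { specialize (HK 1 ltac:(lra)). rewrite RInt_point_R, Rabs_R0 in HK. exact HK. }
  assert (head : forall t, 0 <= t <= 1 -> Rabs (RInt (wave alpha) 0 t) <= 1).
  { intros t Ht. assert (t ^ 2 <= 1) by (rewrite <- (pow1 2); apply pow_incr; lra).
    eapply Rle_trans; [apply abs_RInt_wave_le_sqrt; auto; lra|].
    rewrite pow_i, Rminus_0_r by lia.
    assert (sqrt (rho l - 1) <= sqrt (rho l - t ^ 2)) by (apply sqrt_le_1_alt; lra).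
    pose proof (sqrt_sub_sqrt_pred_le_1 (rho l) ltac:(lra)). lra. }
  destruct (Rle_lt_dec z 1) as [Hz1|Hz1]; [pose proof (head z ltac:(lra)); lra|].
  rewrite (RInt_wave_Chasles alpha 0 1 z) by lra.
  pose proof (head 1 ltac:(lra)).
  pose proof (Rabs_triang (RInt (wave alpha) 0 1) (RInt (wave alpha) 1 z)).
  destruct (Rle_lt_dec z y) as [Hzy|Hzy]; [pose proof (HK z ltac:(lra)); lra|].
  rewrite (RInt_wave_Chasles alpha 1 y z) in * by lra.
  pose proof (HK y ltac:(lra)).
  pose proof (abs_RInt_wave_le_sqrt alpha y z ltac:(lra) Hz).
  pose proof (sqrt_pos (rho l - z ^ 2)).
  pose proof (Rabs_triang (RInt (wave alpha) 1 y) (RInt (wave alpha) y z)).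
  lra.
Qed.

Definition vdc_bound := Rpower (1 + sigma 1%nat + rho l) (1 / 4).
Definition decay_bound :=
  Rpower (INR m) (3 / 2) * / c k * max1 (fun j => max1 (fun i => b j + c i) l) m.

Lemma vdc_bound_ge : 1 <= vdc_bound /\ sqrt (sqrt (rho l + sigma 1%nat)) <= vdc_bound.
Proof.
  unfold vdc_bound. pose proof sigma_1_nonneg.
  replace (1 / 4) with (/ 2 * / 2) by field.
  rewrite <- Rpower_mult, (Rpower_sqrt (1 + sigma 1%nat + rho l)), Rpower_sqrt
    by (try apply sqrt_lt_R0; lra).
  split.
  - pose proof (sqrt_le_1_alt 1 (1 + sigma 1%nat + rho l) ltac:(lra)) as H1.
    rewrite sqrt_1 in H1. pose proof (sqrt_le_1_alt 1 _ H1) as H2. rewrite sqrt_1 in H2. exact H2.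
  - apply sqrt_le_1_alt, sqrt_le_1_alt. lra.
Qed.

Lemma decay_bound_ge : 1 <= decay_bound /\ sum1 b m / c k <= decay_bound.
Proof.
  unfold decay_bound. set (M := max1 (fun j => max1 (fun i => b j + c i) l) m).
  assert (HbM : forall j, (1 <= j <= m)%nat -> b j + c k <= M).
  { intros j Hj. eapply Rle_trans; [|apply (max1_ge _ m j Hj)].
    apply (max1_ge (fun i => b j + c i) l k k_range). }
  assert (HcM : c k <= M) by (pose proof (HbM 1%nat ltac:(lia)); pose proof (b_pos 1%nat ltac:(lia)); lra).
  assert (Hm : 1 <= INR m) by (apply (le_INR 1); lia).
  assert (Hpow : INR m <= Rpower (INR m) (3 / 2)).
  { rewrite <- (Rpower_1 (INR m)) at 1 by lra. apply Rle_Rpower; lra. }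
  assert (HMc : 1 <= / c k * M).
  { apply Rmult_le_reg_l with (c k); auto. rewrite <- Rmult_assoc, Rinv_r, Rmult_1_l; lra. }
  assert (Hsum : sum1 b m <= INR m * M).
  { rewrite <- sum1_const. apply sum1_le. intros j Hj. pose proof (HbM j Hj). lra. }
  assert (0 < / c k) by (apply Rinv_0_lt_compat; auto).
  rewrite Rmult_assoc. split; [nra|].
  unfold Rdiv. assert (sum1 b m * / c k <= INR m * M * / c k) by (apply Rmult_le_compat_r; lra).
  nra.
Qed.

Lemma abs_RInt_wave_le_vdc_bound alpha z : 0 <= z -> z ^ 2 < rho l ->
  Rabs (RInt (wave alpha) 0 z) <= 14 * vdc_bound.
Proof.
  intros Hz0 Hz. destruct vdc_bound_ge as [H1 Hr]. pose proof sigma_1_nonneg.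
  destruct (Rle_lt_dec (rho l) 16) as [Hsmall|Hlarge].
  { pose proof (abs_RInt_wave_le_sqrt_rho alpha z Hz0 Hz).
    assert (sqrt (rho l) <= 4) by (rewrite <- (sqrt_pow2 4) by lra; apply sqrt_le_1_alt; lra).
    lra. }
  pose proof (sqrt_lt_R0 (rho l + sigma 1%nat) ltac:(lra)).
  destruct (Rle_lt_dec (rho l - sqrt (rho l + sigma 1%nat)) 1) as [Hnear|Hfar].
  - pose proof (abs_RInt_wave_glue alpha 1 0 z ltac:(lra) ltac:(lra) ltac:(lra)
      ltac:(intros t Ht; replace t with 1 by lra; rewrite RInt_point_R, Rabs_R0; lra) Hz0 Hz).
    assert (sqrt (rho l - 1 ^ 2) <= sqrt (sqrt (rho l + sigma 1%nat)))
      by (apply sqrt_le_1_alt; lra).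
    lra.
  - set (y := sqrt (rho l - sqrt (rho l + sigma 1%nat))).
    assert (Hy2 : y ^ 2 = rho l - sqrt (rho l + sigma 1%nat)) by (apply pow2_sqrt; lra).
    assert (Hy1 : 1 <= y) by (rewrite <- sqrt_1; apply sqrt_le_1_alt; lra).
    pose proof (abs_RInt_wave_glue alpha y (12 * sqrt (sqrt (rho l + sigma 1%nat))) z
      ltac:(lra) Hy1 ltac:(lra)
      ltac:(intros t Ht; apply abs_RInt_wave_le_root4; try lra;
            assert (t ^ 2 <= y ^ 2) by (apply pow_incr; lra); lra) Hz0 Hz).
    rewrite Hy2 in *.
    replace (rho l - (rho l - sqrt (rho l + sigma 1%nat))) with (sqrt (rho l + sigma 1%nat))
      in * by ring.
    lra.
Qed.

Lemma abs_RInt_wave_le_decay_bound alpha z : 0 <= z -> z ^ 2 < rho l ->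
  Rabs (RInt (wave alpha) 0 z) <= 14 * decay_bound.
Proof.
  intros Hz0 Hz. destruct decay_bound_ge as [H1 Hsum].
  destruct (Rle_lt_dec (rho l) 16) as [Hsmall|Hlarge].
  { pose proof (abs_RInt_wave_le_sqrt_rho alpha z Hz0 Hz).
    assert (sqrt (rho l) <= 4) by (rewrite <- (sqrt_pow2 4) by lra; apply sqrt_le_1_alt; lra).
    lra. }
  set (y := sqrt (rho l - 1)).
  assert (Hy2 : y ^ 2 = rho l - 1) by (apply pow2_sqrt; lra).
  assert (Hy1 : 1 <= y) by (rewrite <- sqrt_1; apply sqrt_le_1_alt; lra).
  pose proof (abs_RInt_wave_glue alpha y (4 + 2 * (sum1 b m / c k)) z ltac:(lra) Hy1 ltac:(lra)
    ltac:(intros t Ht; apply abs_RInt_wave_le_decay; try lra;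
          assert (t ^ 2 <= y ^ 2) by (apply pow_incr; lra); lra) Hz0 Hz).
  rewrite Hy2 in *. replace (rho l - (rho l - 1)) with 1 in * by ring. rewrite sqrt_1 in *.
  lra.
Qed.

Lemma abs_RInt_wave_le_min alpha z : 0 <= z -> z ^ 2 < rho l ->
  Rabs (RInt (wave alpha) 0 z) <= 14 * Rmin vdc_bound decay_bound.
Proof.
  intros Hz0 Hz. pose proof (abs_RInt_wave_le_vdc_bound alpha z Hz0 Hz).
  pose proof (abs_RInt_wave_le_decay_bound alpha z Hz0 Hz).
  unfold Rmin. destruct Rle_dec; lra.
Qed.

Lemma integrand_eq_wave x : integrand m l k eps sigma rho b c x = (wave 0 x, wave (PI / 2) x).
Proof.
  unfold integrand, wave, amp, phase, theta, damping.
  rewrite Rminus_0_r, cos_minus, cos_PI2, sin_PI2.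
  f_equal; unfold Rdiv; ring.
Qed.

End Integrand.

(** * The improper integral *)

Lemma is_RInt_pair (g1 g2 : R -> R) p q : p <= q ->
  (forall x, p <= x <= q -> continuous g1 x /\ continuous g2 x) ->
  is_RInt (fun x => (g1 x, g2 x) : C) p q (RInt g1 p q, RInt g2 p q).
Proof.
  intros Hpq Hc. apply is_RInt_fct_extend_pair;
    apply (RInt_correct (V := R_CompleteNormedModule)), ex_RInt_cont; auto;
    intros x Hx; apply Hc, Hx.
Qed.

Lemma filterlimi_abs_le {T : Type} (F : (T -> Prop) -> Prop) {FF : ProperFilter F}
  (f : T -> C -> Prop) (I : C) K :
  filterlimi f F (locally I) ->
  F (fun t => forall y, f t y -> Rabs (fst y) <= K /\ Rabs (snd y) <= K) ->
  Rabs (fst I) <= K /\ Rabs (snd I) <= K.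
Proof.
  intros Hlim Hbnd.
  assert (near : forall e : posreal, Rabs (fst I) < K + e /\ Rabs (snd I) < K + e).
  { intros e. assert (HI := Hlim (ball I e) (locally_ball I e)). unfold filtermapi in HI.
    destruct (filter_ex _ (filter_and _ _ HI Hbnd))
      as [t [[y [Hy [B1 B2]]] Hb]].
    destruct (Hb y Hy). change (Rabs (fst y - fst I) < e) in B1.
    change (Rabs (snd y - snd I) < e) in B2.
    rewrite Rabs_minus_sym in B1, B2.
    pose proof (Rabs_triang (fst y) (fst I - fst y)).
    pose proof (Rabs_triang (snd y) (snd I - snd y)).
    replace (fst y + (fst I - fst y)) with (fst I) in * by ring.
    replace (snd y + (snd I - snd y)) with (snd I) in * by ring.
    split; lra. }
  split; apply Rnot_lt_le; intros Hgt; assert (He : 0 < Rabs _ - K) by exact (Rgt_minus _ _ Hgt).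
  - destruct (near (mkposreal _ He)) as [H _]. simpl in H. lra.
  - destruct (near (mkposreal _ He)) as [_ H]. simpl in H. lra.
Qed.

Section ImproperIntegral.

Variables (g1 g2 phi : R -> R) (a s : R).
Hypothesis Has : a < s.
Hypothesis g_cont : forall x, a <= x < s -> continuous g1 x /\ continuous g2 x.

Let f x : C := (g1 x, g2 x).
Let FR (ab : R * R) (y : C) := is_RInt f (fst ab) (snd ab) y.

Let FR_iff z y : a <= z < s -> FR (a, z) y <-> y = (RInt g1 a z, RInt g2 a z).
Proof.
  intros Hz. assert (Hf : FR (a, z) (RInt g1 a z, RInt g2 a z)).
  { apply is_RInt_pair; [lra|]. intros x Hx. apply g_cont. lra. }
  split; [|intros ->; exact Hf].
  intros Hy. rewrite <- (is_RInt_unique (V := C_R_CompleteNormedModule) f a z y Hy).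
  apply (is_RInt_unique (V := C_R_CompleteNormedModule)), Hf.
Qed.

Let eventually_from_a (Q : R -> Prop) (P : R * R -> Prop) : at_left s Q ->
  (forall z, a <= z < s -> Q z -> P (a, z)) -> filter_prod (at_point a) (at_left s) P.
Proof.
  intros HQ HP. apply (Filter_prod _ _ _ (fun x => x = a) (fun z => a <= z < s /\ Q z)).
  - reflexivity.
  - apply filter_and; [|exact HQ].
    assert (Hsa : 0 < s - a) by lra. exists (mkposreal _ Hsa). intros y Hy Hys.
    change (Rabs (y - s) < s - a) in Hy. rewrite Rabs_left in Hy by lra. lra.
  - intros x z -> [Hz HQz]. apply HP; auto.
Qed.

Section Existence.

Hypothesis tail_bound : forall y z, a <= y <= z -> z < s ->
  Rabs (RInt g1 y z) <= phi y /\ Rabs (RInt g2 y z) <= phi y.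
Hypothesis phi_lim : filterlim phi (at_left s) (locally 0).

Let increment_lt e y z : a <= y < s -> a <= z < s -> Rabs (phi y) < e -> Rabs (phi z) < e ->
  Rabs (RInt g1 a z - RInt g1 a y) < e /\ Rabs (RInt g2 a z - RInt g2 a y) < e.
Proof.
  revert y z. enough (H : forall y z, a <= y <= z -> z < s -> Rabs (phi y) < e ->
      Rabs (RInt g1 a z - RInt g1 a y) < e /\ Rabs (RInt g2 a z - RInt g2 a y) < e).
  { intros y z Hy Hz Hpy Hpz. destruct (Rle_lt_dec y z); [apply H; auto; lra|].
    rewrite !(Rabs_minus_sym (RInt _ a z)). apply H; auto; lra. }
  intros y z Hyz Hz Hpy. pose proof (Rle_abs (phi y)).
  rewrite (RInt_Chasles_cont g1 a y z), (RInt_Chasles_cont g2 a y z); try lra;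
    try (intros x Hx; apply g_cont; lra).
  replace (RInt g1 a y + RInt g1 y z - RInt g1 a y) with (RInt g1 y z) by lra.
  replace (RInt g2 a y + RInt g2 y z - RInt g2 a y) with (RInt g2 y z) by lra.
  destruct (tail_bound y z); auto. lra.
Qed.

Lemma ex_is_RInt_gen_pair : exists I : C, is_RInt_gen f (at_point a) (at_left s) I.
Proof.
  assert (HF : ProperFilter (filter_prod (at_point a) (at_left s)))
    by (apply filter_prod_proper; try apply at_point_filter; apply at_left_proper_filter).
  apply (filterlimi_locally_cauchy (U := C_R_CompleteNormedModule) (FF := HF) FR).
  - apply (eventually_from_a (fun _ => True)); [apply filter_true|]. intros z Hz _. split.
    + exists (RInt g1 a z, RInt g2 a z). apply FR_iff; auto.
    + intros y1 y2 H1 H2. apply FR_iff in H1, H2; auto. congruence.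
  - intros e. exists (fun ab => fst ab = a /\ a <= snd ab < s /\ Rabs (phi (snd ab)) < e).
    split.
    + apply (eventually_from_a (fun z => Rabs (phi z - 0) < e)); [apply (phi_lim _ (locally_ball 0 e))|].
      intros z Hz Hp. rewrite Rminus_0_r in Hp. simpl. auto.
    + intros [x1 z1] [x2 z2] (E1 & Hz1 & Hp1) (E2 & Hz2 & Hp2) u v Hu Hv. simpl in *. subst.
      apply FR_iff in Hu, Hv; auto. subst. apply increment_lt; auto.
Qed.

End Existence.

Lemma is_RInt_gen_pair_Cmod_le K I :
  (forall z, a <= z < s -> Rabs (RInt g1 a z) <= K /\ Rabs (RInt g2 a z) <= K) ->
  is_RInt_gen f (at_point a) (at_left s) I -> Cmod I <= 2 * K.
Proof.
  intros Hbnd HI.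
  assert (HF : ProperFilter (filter_prod (at_point a) (at_left s)))
    by (apply filter_prod_proper; try apply at_point_filter; apply at_left_proper_filter).
  destruct (filterlimi_abs_le _ FR I K HI) as [B1 B2].
  { apply (eventually_from_a (fun _ => True)); [apply filter_true|].
    intros z Hz _ y Hy. apply FR_iff in Hy; auto. subst. apply Hbnd, Hz. }
  eapply Rle_trans; [apply Cmod_2Rmax|].
  assert (sqrt 2 <= 2) by (rewrite <- (sqrt_pow2 2) at 2 by lra; apply sqrt_le_1_alt; lra).
  assert (Rmax (Rabs (fst I)) (Rabs (snd I)) <= K) by (apply Rmax_lub; auto).
  pose proof (Rle_trans _ _ _ (Rabs_pos (fst I)) (Rmax_l (Rabs (fst I)) (Rabs (snd I)))).
  apply Rle_trans with (2 * Rmax (Rabs (fst I)) (Rabs (snd I))); [|lra].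
  apply Rmult_le_compat_r; lra.
Qed.

End ImproperIntegral.

Lemma filterlim_sqrt_sub_sqr r : 0 <= r ->
  filterlim (fun x => sqrt (r - x ^ 2)) (at_left (sqrt r)) (locally 0).
Proof.
  intros Hr. apply (filterlim_filter_le_1 (F := locally (sqrt r))); [apply filter_le_within|].
  replace 0 with (sqrt (r - sqrt r ^ 2)) by (rewrite pow2_sqrt, Rminus_diag, sqrt_0; auto).
  change (continuous (fun x => sqrt (r - x ^ 2)) (sqrt r)).
  apply continuous_sqrt_comp, continuous_of_ex_derive. auto_derive. exact I.
Qed.

Theorem lemma7p6 :
  exists C0 : R,
  forall (m l : nat), (1 <= m)%nat -> (1 <= l)%nat ->
  forall (sigma rho b c : nat -> R),
    (forall j, (1 <= j < m)%nat -> sigma (S j) <= sigma j) ->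
    0 <= sigma m ->
    (forall i, (1 <= i < l)%nat -> rho (S i) <= rho i) ->
    0 < rho l ->
    (forall j, (1 <= j <= m)%nat -> 0 < b j) ->
    (forall i, (1 <= i <= l)%nat -> 0 < c i) ->
  forall k : nat, (1 <= k <= l)%nat ->
  forall eps : R, eps = 1 \/ eps = -1 ->
  exists I : C,
    is_RInt_gen (integrand m l k eps sigma rho b c)
      (at_point 0) (at_left (sqrt (rho l))) I /\
    Cmod I <= C0 * Rmin (Rpower (1 + sigma 1%nat + rho l) (1/4))
                        (Rpower (INR m) (3/2) * / c k *
                         max1 (fun j => max1 (fun i => b j + c i) l) m).
Proof.
  exists 28. intros m l Hm Hl sigma rho b c Hsigma Hsigma_m Hrho Hrho_l Hb Hc k Hk eps Heps.
  assert (rho_ge : forall i, (1 <= i <= l)%nat -> rho l <= rho i)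
    by (intros i Hi; apply (nonincreasing_le rho l Hrho); lia).
  assert (sigma_range : forall j, (1 <= j <= m)%nat -> 0 <= sigma j <= sigma 1%nat).
  { intros j Hj. pose proof (nonincreasing_le sigma m Hsigma j m ltac:(lia) ltac:(lia)).
    pose proof (nonincreasing_le sigma m Hsigma 1 j ltac:(lia) ltac:(lia)). lra. }
  assert (Hs : 0 < sqrt (rho l)) by (apply sqrt_lt_R0; lra).
  assert (Hsq : forall x, 0 <= x < sqrt (rho l) -> x ^ 2 < rho l)
    by (intros x Hx; rewrite <- (pow2_sqrt (rho l)) by lra; nra).
  set (g alpha := wave m l k eps sigma rho b c alpha).
  assert (g_cont : forall x, 0 <= x < sqrt (rho l) -> continuous (g 0) x /\ continuous (g (PI / 2)) x)
    by (intros x Hx; split; apply continuous_wave; auto).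
  destruct (ex_is_RInt_gen_pair (g 0) (g (PI / 2)) (fun x => sqrt (rho l - x ^ 2)) 0 (sqrt (rho l)))
    as [I HI]; auto using filterlim_sqrt_sub_sqr with real.
  { intros y z Hyz Hz. pose proof (Hsq z ltac:(lra)). pose proof (sqrt_pos (rho l - z ^ 2)).
    split; (eapply Rle_trans; [apply abs_RInt_wave_le_sqrt; auto | lra]). }
  exists I. split.
  - apply (is_RInt_gen_ext (fun x => (g 0 x, g (PI / 2) x))); [|exact HI].
    apply filter_forall. intros ab x _. symmetry. apply integrand_eq_wave.
  - replace 28 with (2 * 14) by ring. rewrite Rmult_assoc.
    apply (is_RInt_gen_pair_Cmod_le (g 0) (g (PI / 2)) 0 (sqrt (rho l))); auto.
    intros z Hz. split; apply abs_RInt_wave_le_min; auto; lra.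
Qed.
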